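(* Let $\mathcal{A}\in\mathbb{R}^{l\times m\times n}$, and let $U_0\in\mathbb{R}^{l\times r_1}$, $V_0\in\mathbb{R}^{m\times r_2}$, $W_0\in\mathbb{R}^{n\times r_3}$ have orthonormal columns. Suppose blocks $U_1,\dots,U_\lambda$ (mode 1), $V_1,\dots,V_\mu$ (mode 2), $W_1,\dots,W_\nu$ (mode 3) have been generated by mode-1, mode-2 and mode-3 block-Krylov steps (as described in the context), where the blocks with subscript $1$ are generated from $U_0,V_0,W_0$ (i.e. $U_1$ is generated with $\bar V=V_0$, $\bar W=W_0$, and analogously for $V_1$ and $W_1$). Then \[ \mathcal{A}\cdot(U_j,V_0,W_0)=\begin{cases}\mathcal{H}^1_0:=\mathcal{A}\cdot(U_0,V_0,W_0), & j=0,\\ \mathcal{H}^1_1:=\mathcal{A}\cdot(U_1,V_0,W_0), & j=1,\\ 0, & 2\le j\le \lambda,\end{cases} \] and the corresponding identities hold for modes 2 and 3, i.e. $\mathcal{A}\cdot(U_0,V_j,W_0)=0$ for $2\le j\le\mu$ and $\mathcal{A}\cdot(U_0,V_0,W_j)=0$ for $2\le j\le\nu$.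
   Context: For a tensor $\mathcal{A}\in\mathbb{R}^{l\times m\times n}$ and matrices $U\in\mathbb{R}^{l\times p}$, $V\in\mathbb{R}^{m\times q}$, $W\in\mathbb{R}^{n\times r}$, write $\mathcal{A}\cdot(U,V,W)\in\mathbb{R}^{p\times q\times r}$ for the tensor with entries $\sum_{\alpha,\beta,\gamma}u_{\alpha i}v_{\beta j}w_{\gamma k}a_{\alpha\beta\gamma}$; $\mathcal{A}\cdot_{2,3}(V,W)\in\mathbb{R}^{l\times q\times r}$ denotes multiplication (by transposes) in modes 2 and 3 only, and similarly for other modes. $\mathtt{unfold}_1(\mathcal{X})$ is the matrix whose columns are the mode-1 fibers of $\mathcal{X}$. A mode-1 block-Krylov step, given previously computed orthonormal blocks $\widehat U_{\lambda-1}=[U_0\,U_1\cdots U_{\lambda-1}]$ (all columns together orthonormal) and matrices $\bar V$, $\bar W$ whose columns are selected from already computed mode-2 and mode-3 blocks, computes $\mathcal{U}=\mathcal{A}\cdot_{2,3}(\bar V,\bar W)$, $\widetilde{\mathcal{U}}=\mathcal{U}-\widehat U_{\lambda-1}\cdot_1(\widehat U_{\lambda-1}^T\cdot_1\mathcal{U})$ (i.e. $\mathtt{unfold}_1(\widetilde{\mathcal U})=(I-\widehat U_{\lambda-1}\widehat U_{\lambda-1}^T)\mathtt{unfold}_1(\mathcal U)$), and a thin QR decomposition $\mathtt{unfold}_1(\widetilde{\mathcal{U}})=U_\lambda H_\lambda$, where $U_\lambda$ has orthonormal columns orthogonal to those of $\widehat U_{\lambda-1}$. Mode-2 and mode-3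 steps are defined analogously. *)

From mathcomp Require Import all_boot all_order all_algebra.
Set Implicit Arguments. Unset Strict Implicit. Unset Printing Implicit Defensive.
Import Order.TTheory GRing.Theory Num.Theory.
Local Open Scope ring_scope.

Section Tensors.
Variable R : realFieldType.

Definition tensor (l m n : nat) := 'I_l -> 'I_m -> 'I_n -> R.

Definition tmul l m n p q r (A : tensor l m n)
  (U : 'M[R]_(l, p)) (V : 'M[R]_(m, q)) (W : 'M[R]_(n, r)) : tensor p q r :=
  fun i j k => \sum_(a < l) \sum_(b < m) \sum_(c < n) U a i * V b j * W c k * A a b c.

Definition tmul23 l m n q r (A : tensor l m n)
  (V : 'M[R]_(m, q)) (W : 'M[R]_(n, r)) : tensor l q r :=
  fun a j k => \sum_(b < m) \sum_(c < n) V b j * W c k * A a b c.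
Definition tmul13 l m n p r (A : tensor l m n)
  (U : 'M[R]_(l, p)) (W : 'M[R]_(n, r)) : tensor p m r :=
  fun i b k => \sum_(a < l) \sum_(c < n) U a i * W c k * A a b c.
Definition tmul12 l m n p q (A : tensor l m n)
  (U : 'M[R]_(l, p)) (V : 'M[R]_(m, q)) : tensor p q n :=
  fun i j c => \sum_(a < l) \sum_(b < m) U a i * V b j * A a b c.

(* mode-k unfoldings: the columns are the mode-k fibers *)
Definition unfold1 l m n (X : tensor l m n) : 'M[R]_(l, m * n) :=
  \matrix_(i < l) mxvec (\matrix_(j < m, k < n) X i j k).
Definition unfold2 l m n (X : tensor l m n) : 'M[R]_(m, l * n) :=
  \matrix_(j < m) mxvec (\matrix_(i < l, k < n) X i j k).
Definition unfold3 l m n (X : tensor l m n) : 'M[R]_(n, l * m) :=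
  \matrix_(k < n) mxvec (\matrix_(i < l, j < m) X i j k).

Definition upper_trig p s (H : 'M[R]_(p, s)) : Prop :=
  forall (i : 'I_p) (j : 'I_s), (j < i)%N -> H i j = 0.

(* Orthogonalize the unfolding T against Uhat and take a thin QR:
   (I - Uhat Uhat^T) T = Unew H, Unew orthonormal columns orthogonal to Uhat. *)
Definition krylov_update k s p c (Uhat : 'M[R]_(k, s)) (T : 'M[R]_(k, c))
  (Unew : 'M[R]_(k, p)) : Prop :=
  exists H : 'M[R]_(p, c),
    [/\ T - Uhat *m (Uhat^T *m T) = Unew *m H,
        Unew^T *m Unew = 1%:M,
        Uhat^T *m Unew = 0
      & upper_trig H].

Definition mode1_step l m n s q r p (A : tensor l m n) (Uhat : 'M[R]_(l, s))
  (Vbar : 'M[R]_(m, q)) (Wbar : 'M[R]_(n, r)) (Unew : 'M[R]_(l, p)) : Prop :=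
  krylov_update Uhat (unfold1 (tmul23 A Vbar Wbar)) Unew.
Definition mode2_step l m n s p r q (A : tensor l m n) (Vhat : 'M[R]_(m, s))
  (Ubar : 'M[R]_(l, p)) (Wbar : 'M[R]_(n, r)) (Vnew : 'M[R]_(m, q)) : Prop :=
  krylov_update Vhat (unfold2 (tmul13 A Ubar Wbar)) Vnew.
Definition mode3_step l m n s p q r (A : tensor l m n) (What : 'M[R]_(n, s))
  (Ubar : 'M[R]_(l, p)) (Vbar : 'M[R]_(m, q)) (Wnew : 'M[R]_(n, r)) : Prop :=
  krylov_update What (unfold3 (tmul12 A Ubar Vbar)) Wnew.

Definition cols_selected k c (ps : nat -> nat) (X : forall i : nat, 'M[R]_(k, ps i))
  (ok : nat -> Prop) (Xbar : 'M[R]_(k, c)) : Prop :=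
  forall c0 : 'I_c, exists i : nat, ok i /\ exists c1 : 'I_(ps i), col c0 Xbar = col c1 (X i).

Definition hat k (ps : nat -> nat) (X : forall i : nat, 'M[R]_(k, ps i)) (j : nat)
  : 'M[R]_(k, \sum_(i < j) ps i) :=
  \mxrow_(i < j) X i.

End Tensors.

From mathcomp Require Import all_boot all_order all_algebra.
Import Order.TTheory GRing.Theory Num.Theory.
Set Implicit Arguments. Unset Strict Implicit. Unset Printing Implicit Defensive.
Local Open Scope ring_scope.

(* The step producing U_1 writes its input T as U_0 (U_0^T T) + U_1 H, so
   T lies in the column span of [U_0 U_1].  Every later block U_j is
   orthogonal to [U_0 U_1 ... U_(j-1)], hence U_j^T T = 0; and the entries of
   A . (U_j, V_0, W_0) are exactly the entries of U_j^T T = U_j^T unfold_1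
   (A ._(2,3) (V_0, W_0)).  Modes 2 and 3 are symmetric. *)

Section Blocks.
Variables (R : realFieldType) (k : nat) (ps : nat -> nat).
Variable X : forall i : nat, 'M[R]_(k, ps i).

Lemma tr_hat_mul_eq0 j c (Y : 'M[R]_(k, c)) :
  (hat X j)^T *m Y = 0 <-> (forall i, (i < j)%N -> (X i)^T *m Y = 0).
Proof.
rewrite /hat tr_mxrow mxcol_mul -(mxcol0 (p_ := fun i : 'I_j => ps i)).
split=> [/eq_mxcolP XY i lt_ij | XY]; first exact: (XY (Ordinal lt_ij)).
by apply/eq_mxcolP => i; apply: XY.
Qed.

Lemma tr_hat1_mul_eq0 j c (Y : 'M[R]_(k, c)) :
  (0 < j)%N -> (hat X j)^T *m Y = 0 -> (hat X 1)^T *m Y = 0.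
Proof.
move=> j_gt0 /tr_hat_mul_eq0 XY; apply/tr_hat_mul_eq0 => i.
by rewrite ltnS leqn0 => /eqP->; apply: XY.
Qed.

End Blocks.

Section KrylovUpdate.
Variables (R : realFieldType) (k s p c : nat).
Variables (Uhat : 'M[R]_(k, s)) (T : 'M[R]_(k, c)) (Unew : 'M[R]_(k, p)).
Hypothesis step : krylov_update Uhat T Unew.

Lemma krylov_update_orth : Uhat^T *m Unew = 0.
Proof. by case: step => H []. Qed.

Lemma krylov_update_input_orth q (Y : 'M[R]_(k, q)) :
  Uhat^T *m Y = 0 -> Unew^T *m Y = 0 -> Y^T *m T = 0.
Proof.
case: step => H [eqT _ _ _] UhatY UnewY.
have -> : T = Uhat *m (Uhat^T *m T) + Unew *m H by rewrite -eqT addrC subrK.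
have YUhat : Y^T *m Uhat = 0 by rewrite -[Uhat]trmxK -trmx_mul UhatY trmx0.
have YUnew : Y^T *m Unew = 0 by rewrite -[Unew]trmxK -trmx_mul UnewY trmx0.
by rewrite mulmxDr !mulmxA YUhat YUnew !mul0mx addr0.
Qed.

End KrylovUpdate.

Lemma later_block_annihilates_first_input (R : realFieldType) k ps
    (X : forall i : nat, 'M[R]_(k, ps i)) c (T : 'M[R]_(k, c)) j :
  (1 < j)%N -> krylov_update (hat X 1) T (X 1%N) -> (hat X j)^T *m X j = 0 ->
  (X j)^T *m T = 0.
Proof.
move=> j_gt1 step1 orth_j; apply: (krylov_update_input_orth step1).
  exact: tr_hat1_mul_eq0 (ltnW j_gt1) orth_j.
by move/tr_hat_mul_eq0: orth_j; apply.
Qed.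

Section Unfoldings.
Variables (R : realFieldType) (l m n p q r : nat) (A : tensor R l m n).
Variables (U : 'M[R]_(l, p)) (V : 'M[R]_(m, q)) (W : 'M[R]_(n, r)).

Lemma tmul_unfold1 a b c :
  tmul A U V W a b c = (U^T *m unfold1 (tmul23 A V W)) a (mxvec_index b c).
Proof.
rewrite !mxE /tmul; apply: eq_bigr => a' _; rewrite !mxE mxvecE mxE /tmul23.
rewrite big_distrr; apply: eq_bigr => b' _; rewrite big_distrr.
by apply: eq_bigr => c' _; rewrite /= !mulrA.
Qed.

Lemma tmul_unfold2 a b c :
  tmul A U V W a b c = (V^T *m unfold2 (tmul13 A U W)) b (mxvec_index a c).
Proof.
rewrite !mxE /tmul exchange_big; apply: eq_bigr => b' _; rewrite !mxE mxvecE mxE.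
rewrite /tmul13 big_distrr; apply: eq_bigr => a' _; rewrite big_distrr.
by apply: eq_bigr => c' _; rewrite /= !mulrA [V b' b * _]mulrC.
Qed.

Lemma tmul_unfold3 a b c :
  tmul A U V W a b c = (W^T *m unfold3 (tmul12 A U V)) c (mxvec_index a b).
Proof.
rewrite !mxE /tmul; under eq_bigr do rewrite exchange_big.
rewrite exchange_big; apply: eq_bigr => c' _; rewrite !mxE mxvecE mxE /tmul12.
rewrite big_distrr; apply: eq_bigr => a' _; rewrite big_distrr.
by apply: eq_bigr => b' _; rewrite /= !mulrA; congr (_ * _); rewrite mulrC mulrA.
Qed.

End Unfoldings.

Theorem lemma4p1 (R : realFieldType) (l m n : nat) (A : tensor R l m n)
  (pU pV pW : nat -> nat)
  (U : forall j : nat, 'M[R]_(l, pU j))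
  (V : forall j : nat, 'M[R]_(m, pV j))
  (W : forall j : nat, 'M[R]_(n, pW j))
  (lam mu nu : nat)
  (* time stamps at which the blocks are computed (blocks 0 are given at time 0) *)
  (tU tV tW : nat -> nat) :
  (* U_0, V_0, W_0 have orthonormal columns *)
  (U 0%N)^T *m U 0%N = 1%:M ->
  (V 0%N)^T *m V 0%N = 1%:M ->
  (W 0%N)^T *m W 0%N = 1%:M ->
  tU 0%N = 0%N -> tV 0%N = 0%N -> tW 0%N = 0%N ->
  (forall j, (j < lam)%N -> (tU j < tU j.+1)%N) ->
  (forall j, (j < mu)%N -> (tV j < tV j.+1)%N) ->
  (forall j, (j < nu)%N -> (tW j < tW j.+1)%N) ->
  (* the blocks with subscript 1 are generated from U_0, V_0, W_0 *)
  ((0 < lam)%N -> mode1_step A (hat U 1) (V 0%N) (W 0%N) (U 1%N)) ->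
  ((0 < mu)%N -> mode2_step A (hat V 1) (U 0%N) (W 0%N) (V 1%N)) ->
  ((0 < nu)%N -> mode3_step A (hat W 1) (U 0%N) (V 0%N) (W 1%N)) ->
  (* later blocks: block-Krylov steps with columns selected from already computed blocks *)
  (forall j, (2 <= j <= lam)%N ->
     exists (q r : nat) (Vbar : 'M[R]_(m, q)) (Wbar : 'M[R]_(n, r)),
       [/\ cols_selected V (fun k => (k <= mu)%N /\ (tV k < tU j)%N) Vbar,
           cols_selected W (fun k => (k <= nu)%N /\ (tW k < tU j)%N) Wbar
         & mode1_step A (hat U j) Vbar Wbar (U j)]) ->
  (forall j, (2 <= j <= mu)%N ->
     exists (p r : nat) (Ubar : 'M[R]_(l, p)) (Wbar : 'M[R]_(n, r)),
       [/\ cols_selected U (fun k => (k <= lam)%N /\ (tU k < tV j)%N) Ubar,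
           cols_selected W (fun k => (k <= nu)%N /\ (tW k < tV j)%N) Wbar
         & mode2_step A (hat V j) Ubar Wbar (V j)]) ->
  (forall j, (2 <= j <= nu)%N ->
     exists (p q : nat) (Ubar : 'M[R]_(l, p)) (Vbar : 'M[R]_(m, q)),
       [/\ cols_selected U (fun k => (k <= lam)%N /\ (tU k < tW j)%N) Ubar,
           cols_selected V (fun k => (k <= mu)%N /\ (tV k < tW j)%N) Vbar
         & mode3_step A (hat W j) Ubar Vbar (W j)]) ->
  [/\ forall j, (2 <= j <= lam)%N ->
        forall a b c, tmul A (U j) (V 0%N) (W 0%N) a b c = 0,
      forall j, (2 <= j <= mu)%N ->
        forall a b c, tmul A (U 0%N) (V j) (W 0%N) a b c = 0
    & forall j, (2 <= j <= nu)%N ->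
        forall a b c, tmul A (U 0%N) (V 0%N) (W j) a b c = 0].
Proof.
move=> _ _ _ _ _ _ _ _ _ stepU1 stepV1 stepW1 stepU stepV stepW.
split=> j j_range a b c; have /andP[j_gt1 j_le] := j_range;
  have j_gt0 := leq_trans (ltnW j_gt1) j_le.
- have [_ [_ [_ [_ [_ _ /krylov_update_orth orth_j]]]]] := stepU j j_range.
  rewrite tmul_unfold1.
  by rewrite (later_block_annihilates_first_input j_gt1 (stepU1 j_gt0)) ?mxE.
- have [_ [_ [_ [_ [_ _ /krylov_update_orth orth_j]]]]] := stepV j j_range.
  rewrite tmul_unfold2.
  by rewrite (later_block_annihilates_first_input j_gt1 (stepV1 j_gt0)) ?mxE.
- have [_ [_ [_ [_ [_ _ /krylov_update_orth orth_j]]]]] := stepW j j_range.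
  rewrite tmul_unfold3.
  by rewrite (later_block_annihilates_first_input j_gt1 (stepW1 j_gt0)) ?mxE.
Qed.
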